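(* Let $q_1=\dfrac{\rho\varepsilon}{1-\rho(1-\varepsilon)}$ and $q_2=(1-\varepsilon)^{I-1}$, and let $\bar\varepsilon\in(0,1)$ be the unique value of $\varepsilon$ at which $q_1=q_2$. If $0<\varepsilon<\bar\varepsilon$ then for every information tree $\mathcal T$ and every $p$: $C^p_{\mathcal T}(G)=\Omega$ if $p\le q_1$; $C^p_{\mathcal T}(G)=Y^*$ if $q_1<p\le q_2$; $C^p_{\mathcal T}(G)=\varnothing$ if $p>q_2$.
   Context: Model. Fix an integer $I\ge2$, agents $\mathcal I=\{1,\dots,I\}$, a prior $\rho\in(0,1)$ and a loss probability $\varepsilon\in(0,1)$. A state of nature $\theta\in\{g,b\}$ has $\Pr(\theta=g)=\rho$. A forest $F$ on $\mathcal I$ is a collection of vertex-disjoint undirected trees $T^1,\dots,T^R$ whose vertex sets partition $\mathcal I$; a seeding $s=(s^1,\dots,s^R)$ chooses exactly one vertex $s^r$ of each $T^r$. The pair $\mathcal T=(F,s)$ is an information tree: orient each $T^r$ away from $s^r$ and add a root $0$ (the planner) with an arc $0\to s^r$ for each $r$. If $\theta=b$ no messages are sent. If $\theta=g$ the planner sends a message along each arc $0\to s^r$, and every agent who receives a message forwards it along every arc leaving her. Each transmission along an arc is lost independently with probability $\varepsilon$. Agent $i$ observes only $x_i\in\{y,n\}$ (received / not). $\Omega=\{g,b\}\times\{y,n\}^I$, $\mathbb P_{\mathcal T}$ the induced probability. $G=\{\theta=g\}$, $Y_i=\{x_i=y\}$, $N_i=\Omega\setminus Y_i$, $Y^*=\bigcap_iY_i$.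 $B^p_i(E)=\{\omega:\mathbb P_{\mathcal T}[E\mid x_i=x_i(\omega)]\ge p\}$, $B^p(E)=\bigcap_iB^p_i(E)$, $B^{p,0}(E)=E$, $B^{p,\ell}(E)=B^p(B^{p,\ell-1}(E))$, $C^p_{\mathcal T}(E)=\bigcap_{\ell\ge1}B^{p,\ell}(E)$. For any seed $1$, $\mathbb P_{\mathcal T}[G\mid N_1]=q_1$ and $\mathbb P_{\mathcal T}[Y^*\mid Y_1]=q_2$; $q_1$ is increasing and $q_2$ decreasing in $\varepsilon$. *)

From HB Require Import structures.
From mathcomp Require Import all_boot all_order all_algebra.
Set Implicit Arguments. Unset Strict Implicit. Unset Printing Implicit Defensive.
Import Order.TTheory GRing.Theory Num.Theory.
Local Open Scope ring_scope.

(* An information tree on agents 'I_I: each agent i has a parent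
   [par i] : None = the planner (root 0, i.e. i is a seed), Some j = agent j.
   This is exactly the oriented rooted forest (F, s) plus the root 0. *)
Definition info_tree (I : nat) (par : 'I_I -> option 'I_I) : Prop :=
  forall i : 'I_I, exists k : nat, iter k (fun o => obind par o) (Some i) = None.

(* State space Omega = {g,b} x {y,n}^I ; true = g, true = y (received). *)
Definition Omega (I : nat) := (bool * {ffun 'I_I -> bool})%type.

Section Model.
Variables (R : realFieldType) (I : nat) (rho eps : R) (par : 'I_I -> option 'I_I).

(* did the parent of i receive the message (the planner always "has" it) *)
Definition parent_rec (x : {ffun 'I_I -> bool}) (i : 'I_I) : bool :=
  if par i is Some j then x j else true.

Definition trans (pr xi : bool) : R :=
  if pr then (if xi then 1 - eps else eps) else (if xi then 0 else 1).

Definition weight (w : Omega I) : R :=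
  if w.1 then rho * \prod_(i : 'I_I) trans (parent_rec w.2 i) (w.2 i)
  else (1 - rho) * (if [forall i, ~~ w.2 i] then 1 else 0).

Definition Prob (E : {set Omega I}) : R := \sum_(w in E) weight w.

Definition obs (i : 'I_I) (v : bool) : {set Omega I} := [set w : Omega I | w.2 i == v].

Definition cond (E : {set Omega I}) (i : 'I_I) (v : bool) : R :=
  Prob (E :&: obs i v) / Prob (obs i v).

Definition Bi (p : R) (i : 'I_I) (E : {set Omega I}) : {set Omega I} :=
  [set w : Omega I | p <= cond E i (w.2 i)].

Definition Bp (p : R) (E : {set Omega I}) : {set Omega I} :=
  \bigcap_(i : 'I_I) Bi p i E.

Definition Cp (p : R) (E : {set Omega I}) (w : Omega I) : Prop :=
  forall l : nat, w \in iter l.+1 (Bp p) E.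

End Model.

Definition Gev (I : nat) : {set Omega I} := [set w : Omega I | w.1].
Definition Ystar (I : nat) : {set Omega I} := [set w : Omega I | [forall i, w.2 i]].

Definition q1 (R : realFieldType) (rho eps : R) : R := rho * eps / (1 - rho * (1 - eps)).
Definition q2 (R : realFieldType) (I : nat) (eps : R) : R := (1 - eps) ^+ I.-1.

From mathcomp Require Import all_boot all_order all_algebra.
From mathcomp Require Import ring lra.
Set Implicit Arguments. Unset Strict Implicit. Unset Printing Implicit Defensive.
Import Order.TTheory GRing.Theory Num.Theory.
Local Open Scope ring_scope.

(* The message process in state g is a Bayesian network on the tree, so agents
   can be summed out leaf by leaf: an agent receives the message with
   probability 1 - eps times the probability that her parent does.  Hence an
   agent who received nothing still believes G with probability at least q1,
   but believes that her parent received the message with probability at most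
   q1.  So for p <= q1 every state is common p-belief of G, while for p > q1
   the l-th iterate of p-belief in G forces every agent within distance l of
   the planner to have received the message, which puts common p-belief of G
   inside Y*.  Finally Y* is p-evident iff p <= q2: a receiving seed believes
   Y* with probability exactly q2, any other receiver with a larger one. *)

Section TreeShape.
Variables (I : nat) (par : 'I_I -> option 'I_I).
Hypothesis tree : info_tree par.

Definition up (o : option 'I_I) : option 'I_I := obind par o.

Definition ancestor_closed (U : {set 'I_I}) : Prop :=
  forall i k, i \in U -> par i = Some k -> k \in U.

Definition parent_in (U : {set 'I_I}) (j : 'I_I) : Prop :=
  forall k, par j = Some k -> k \in U.

Lemma iter_up_None n : iter n up None = None.
Proof. by elim: n => //= n ->. Qed.

Lemma iter_up_stop m n (o : option 'I_I) :
  iter m up o = None -> iter (n + m) up o = None.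
Proof. by rewrite iterD => ->; apply: iter_up_None. Qed.

Lemma depth_bound : exists L, forall j, iter L up (Some j) = None.
Proof.
have [m hm] := fin_all_exists tree.
exists (\max_j m j) => j; rewrite -(subnK (leq_bigmax j)).
exact: iter_up_stop.
Qed.

(* Walking up from an agent outside [U], the last agent outside [U] before
   reaching [U] or the planner has its parent in [U]. *)
Lemma exists_frontier (U : {set 'I_I}) j0 : j0 \notin U ->
  exists2 j, j \notin U & parent_in U j.
Proof.
move=> j0U; have [m hm] := tree j0.
pose inU n := if iter n up (Some j0) is Some i then i \in U else true.
have [|n inUn minN] := ex_minnP (ex_intro inU m _); first by rewrite /inU hm.
case: n inUn minN => [|n] inUn minN; first by move: inUn; rewrite /inU /= (negbTE j0U).
have : ~~ inU n by apply/negP => /minN; rewrite ltnn.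
move: inUn; rewrite /inU iterS; case: (iter n up (Some j0)) => [j|] //= inUn jU.
by exists j => // k pk; move: inUn; rewrite /up /= pk.
Qed.

Lemma exists_seed : (0 < I)%N -> exists s, par s = None.
Proof.
move=> I0; have [s _ hs] := @exists_frontier set0 (Ordinal I0) (negbT (in_set0 _)).
by exists s; case E: (par s) => [k|] //; have := hs k E; rewrite in_set0.
Qed.

Lemma ancestor_closedU1 U j :
  ancestor_closed U -> parent_in U j -> ancestor_closed (j |: U).
Proof.
move=> hU hj i k; rewrite !in_setU1 => /predU1P[->|iU] pk.
  by rewrite hj ?orbT.
by rewrite (hU _ _ iU pk) orbT.
Qed.

Lemma exists_strict_ancestors j : exists S : {set 'I_I},
  [/\ ancestor_closed S, j \notin S & parent_in S j].
Proof.
have [L hL] := depth_bound.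
exists [set k | [exists n : 'I_L, iter n.+1 up (Some j) == Some k]]; split.
- move=> i k /[!inE] /existsP[n /eqP hn] pk; apply/existsP.
  have ltnL : (n.+1 < L)%N.
    rewrite ltnNge; apply/negP => leLn.
    by have := iter_up_stop (n.+1 - L) (hL j); rewrite subnK // hn.
  by exists (Ordinal ltnL); rewrite iterS hn /= pk.
- rewrite inE; apply/negP => /existsP[n /eqP hn].
  have cycle t : iter (t * n.+1) up (Some j) = Some j.
    by elim: t => // t IHt; rewrite mulSn iterD IHt hn.
  by move: (cycle L); rewrite mulnSr (iter_up_stop _ (hL j)).
- move=> k pk; rewrite inE; apply/existsP.
  have L0 : (0 < L)%N by case: L hL => // /(_ j).
  by exists (Ordinal L0); rewrite /= pk.
Qed.

End TreeShape.

Section Marginal.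
Variables (R : realFieldType) (I : nat) (eps : R) (par : 'I_I -> option 'I_I).
Hypothesis tree : info_tree par.

Local Notation X := {ffun 'I_I -> bool}.
Local Notation pr := (parent_rec par).
Local Notation parent_in := (parent_in par).
Local Notation ancestor_closed := (ancestor_closed par).

Definition silent : X := [ffun=> false].

Definition tree_weight (x : X) : R := \prod_i trans eps (pr x i) (x i).

Definition partial_weight (U : {set 'I_I}) (x : X) : R :=
  \prod_(i in U) trans eps (pr x i) (x i).

Definition vanishes_off (U : {set 'I_I}) (x : X) : bool :=
  [forall i, (i \notin U) ==> ~~ x i].

Definition depends_on (U : {set 'I_I}) (f : X -> R) : Prop :=
  forall x y : X, {in U, x =1 y} -> f x = f y.

Lemma parent_rec_depends U j (x y : X) :
  parent_in U j -> {in U, x =1 y} -> pr x j = pr y j.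
Proof. by rewrite /parent_rec => hj hxy; case E: (par j) => [k|] //; apply/hxy/hj. Qed.

Lemma partial_weight_depends U : ancestor_closed U -> depends_on U (partial_weight U).
Proof.
move=> hU x y hxy; apply: eq_bigr => i iU.
by rewrite (@parent_rec_depends U i x y) ?hxy // => k; apply: hU.
Qed.

Definition flip (j : 'I_I) (x : X) : X := [ffun i => if i == j then ~~ x i else x i].

Lemma flipK j : involutive (flip j).
Proof. by move=> x; apply/ffunP => i; rewrite !ffunE; case: eqP; rewrite ?negbK. Qed.

Lemma flip_off j (U : {set 'I_I}) (x : X) : j \notin U -> {in U, flip j x =1 x}.
Proof. by move=> jU i iU; rewrite ffunE; case: eqP iU => // ->; rewrite (negbTE jU). Qed.

Lemma vanishes_offU1 (U : {set 'I_I}) j (x : X) : j \notin U ->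
  vanishes_off (j |: U) x && ~~ x j = vanishes_off U x.
Proof.
move=> jU; apply/andP/forallP => [[/forallP H xj] i | H].
  apply/implyP => iU; have [-> //|ij] := eqVneq i j.
  by apply: (implyP (H i)); rewrite in_setU1 negb_or ij.
split; last exact: (implyP (H j)).
apply/forallP => i; apply/implyP; rewrite in_setU1 negb_or => /andP[_].
exact: (implyP (H i)).
Qed.

Lemma vanishes_offU1_flip (U : {set 'I_I}) j (x : X) : j \notin U ->
  vanishes_off (j |: U) (flip j x) && (flip j x) j = vanishes_off U x.
Proof.
move=> jU; rewrite -(vanishes_offU1 x jU) [flip j x j]ffunE eqxx; congr (_ && _).
by apply: eq_forallb => i; rewrite ffunE; case: eqP => // ->; rewrite setU11.
Qed.

(* Since [j] has no child in [j |: U], only its own kernel involves [x j]. *)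
Lemma sum_out_frontier U j (g : X -> R) (h : bool -> R) :
  ancestor_closed U -> j \notin U -> parent_in U j -> depends_on U g ->
  \sum_(x | vanishes_off (j |: U) x) partial_weight (j |: U) x * g x * h (x j) =
  \sum_(x | vanishes_off U x) partial_weight U x * g x *
     (trans eps (pr x j) false * h false + trans eps (pr x j) true * h true).
Proof.
move=> hU jU hj hg.
have splitj x : partial_weight (j |: U) x = trans eps (pr x j) (x j) * partial_weight U x.
  by rewrite /partial_weight big_setU1.
rewrite (bigID (fun x : X => x j)) /= addrC.
under [RHS]eq_bigr do rewrite mulrDr.
rewrite big_split /=; congr (_ + _).
  apply: eq_big => x; first exact: vanishes_offU1.
  by case/andP=> _ /negbTE xj; rewrite splitj xj; ring.
rewrite (reindex_inj (can_inj (flipK j))) /=.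
apply: eq_big => x; first exact: vanishes_offU1_flip.
rewrite vanishes_offU1_flip // => /forallP/(_ j)/implyP/(_ jU)/negbTE xj.
have fx := flip_off x jU.
rewrite splitj (partial_weight_depends hU fx) (hg _ _ fx).
by rewrite (parent_rec_depends hj fx) ffunE eqxx xj; ring.
Qed.

(* The right-hand side is the joint law of the agents of [U], a configuration
   of [U] being represented by its extension by [false] outside [U]. *)
Lemma marginal U f : ancestor_closed U -> depends_on U f ->
  \sum_x tree_weight x * f x = \sum_(x | vanishes_off U x) partial_weight U x * f x.
Proof.
have [n] := ubnP #|~: U|; elim: n U => // n IH U /ltnSE cardU hU hf.
have [-> | ] := eqVneq U setT.
  apply: eq_big => [x|x _]; first by symmetry; apply/forallP => i; rewrite in_setT.
  by rewrite /partial_weight (eq_bigl _ _ (fun i => in_setT i)).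
rewrite -subTset => /subsetPn[j0 _ /(exists_frontier tree)[j jU hj]].
have hf' : depends_on (j |: U) f.
  by move=> x y hxy; apply: hf => i iU; apply: hxy; rewrite in_setU1 iU orbT.
have cardU' : (#|~: (j |: U)| < n)%N.
  apply: leq_trans cardU; rewrite (cardsD1 j (~: U)) in_setC jU.
  by rewrite setCU setIC -setDE add1n.
rewrite (IH _ cardU' (ancestor_closedU1 hU hj) hf').
under eq_bigr do rewrite -[_ * f _]mulr1.
rewrite (@sum_out_frontier U j f (fun=> 1)) //.
by apply: eq_bigr => x _; case: (pr x j) => /=; ring.
Qed.

Lemma sum_tree_weight : \sum_x tree_weight x = 1.
Proof.
under eq_bigr do rewrite -[tree_weight _]mulr1.
rewrite (@marginal set0) //; last by move=> i k; rewrite in_set0.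
rewrite (big_pred1 silent) => [|x]; first by rewrite /partial_weight big_set0 mulr1.
rewrite /vanishes_off /=; apply/forallP/eqP => [H|-> i]; last by rewrite ffunE implybT.
by apply/ffunP => i; rewrite ffunE; apply/negbTE/(implyP (H i)); rewrite in_set0.
Qed.

Lemma sum_received j :
  \sum_(x : X | x j) tree_weight x = (1 - eps) * \sum_(x : X | pr x j) tree_weight x.
Proof.
have [S [hS jS hj]] := exists_strict_ancestors tree j.
pose ind (b : bool) : R := if b then 1 else 0.
have sum_ind (P : pred X) : \sum_(x | P x) tree_weight x = \sum_x tree_weight x * ind (P x).
  by rewrite big_mkcond; apply: eq_bigr => x _; rewrite /ind; case: (P x); rewrite ?mulr1 ?mulr0.
rewrite !sum_ind (@marginal (j |: S) _ (ancestor_closedU1 hS hj)); last first.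
  by move=> x y hxy; rewrite hxy // setU11.
rewrite [in RHS](@marginal S _ hS); last by move=> x y hxy; rewrite (parent_rec_depends hj hxy).
under eq_bigr do rewrite -[partial_weight _ _]mulr1.
rewrite (@sum_out_frontier S j (fun=> 1) ind) // mulr_sumr; apply: eq_bigr => x _.
by rewrite /ind; case: (pr x j) => /=; ring.
Qed.

End Marginal.

Section Thresholds.
Variable R : realFieldType.
Implicit Types rho eps r m : R.

Lemma q1_increasing rho eps eps' : 0 < rho < 1 -> 0 <= eps -> eps < eps' ->
  q1 rho eps < q1 rho eps'.
Proof.
move=> /andP[rho_gt0 rho_lt1] eps_ge0 lt_eps.
rewrite /q1 ltr_pdivrMr; last by nra.
rewrite mulrAC ltr_pdivlMr; last by nra.
have : 0 < rho * (1 - rho) * (eps' - eps) by apply: mulr_gt0; nra.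
by nra.
Qed.

(* The posterior of G of an agent who did not receive the message, [r] being
   her probability of receiving it in state g. *)
Lemma q1_le_posterior_G rho eps r : 0 < rho < 1 -> 0 <= eps -> 0 <= r <= 1 - eps ->
  q1 rho eps <= rho * (1 - r) / (1 - rho * r).
Proof.
move=> /andP[rho_gt0 rho_lt1] eps_ge0 /andP[r_ge0 r_le].
rewrite /q1 ler_pdivrMr; last by nra.
rewrite mulrAC ler_pdivlMr; last by nra.
have : 0 <= rho * (1 - rho) * (1 - eps - r) by apply: mulr_ge0; nra.
by nra.
Qed.

(* The posterior that the parent received the message, for an agent who did
   not, [m] being the probability that the parent receives it in state g. *)
Lemma posterior_lost_le_q1 rho eps m : 0 < rho < 1 -> 0 <= eps <= 1 -> 0 <= m <= 1 ->
  rho * eps * m / (1 - rho * (1 - eps) * m) <= q1 rho eps.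
Proof.
move=> /andP[rho_gt0 rho_lt1] /andP[eps_ge0 eps_le1] /andP[m_ge0 m_le1].
have t_le1 : (1 - eps) * m <= 1 by rewrite -[1]mulr1 ler_pM //; lra.
rewrite /q1 ler_pdivrMr; last by rewrite -mulrA; nra.
rewrite [X in _ <= X]mulrAC ler_pdivlMr; last by nra.
have : 0 <= rho * eps * (1 - m) by apply: mulr_ge0; nra.
by nra.
Qed.

Lemma q2_nonincreasing (I : nat) eps eps' : 0 <= eps <= eps' -> eps' <= 1 ->
  q2 I eps' <= q2 I eps.
Proof. by move=> /andP[? ?] ?; rewrite /q2 lerXn2r ?nnegrE; lra. Qed.

End Thresholds.

Section Beliefs.
Variables (R : realFieldType) (I : nat) (rho eps : R) (par : 'I_I -> option 'I_I).
Hypotheses (tree : info_tree par) (I_gt0 : (0 < I)%N).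
Hypotheses (rho01 : 0 < rho < 1) (eps01 : 0 < eps < 1).

Local Notation X := {ffun 'I_I -> bool}.
Local Notation pr := (parent_rec par).
Local Notation W := (tree_weight eps par).
Local Notation P := (Prob rho eps par).
Local Notation cnd := (cond rho eps par).
Local Notation silent := (@silent I).
Implicit Types (E F : {set Omega I}) (x : X) (w : Omega I).

Definition all_received : X := [ffun=> true].

Lemma trans_ge0 b c : 0 <= trans eps b c.
Proof. by case/andP: eps01 => ? ?; case: b c => -[] /=; lra. Qed.

Lemma tree_weight_ge0 x : 0 <= W x.
Proof. by apply: prodr_ge0 => i _; apply: trans_ge0. Qed.

Lemma weight_ge0 w : 0 <= weight rho eps par w.
Proof.
case/andP: rho01 => ? ?; rewrite /weight; case: ifP => _.
  by apply: mulr_ge0; [lra | apply: tree_weight_ge0].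
by apply: mulr_ge0; [lra | case: ifP => _; lra].
Qed.

(* In the bad state no message is sent, so only [silent] carries weight. *)
Lemma ProbE E : P E = rho * \sum_(x | (true, x) \in E) W x +
                      (1 - rho) * ((false, silent) \in E)%:R.
Proof.
rewrite /Prob big_mkcond.
transitivity (\sum_(a : bool) \sum_(x : X)
   (if (a, x) \in E then weight rho eps par (a, x) else 0)).
  by rewrite pair_big; apply: eq_big => -[a x].
rewrite big_bool /=; congr (_ + _).
  by rewrite mulr_sumr [RHS]big_mkcond; apply: eq_bigr => x _; case: ifP; rewrite ?mulr0.
rewrite (bigD1 silent) //= big1 ?addr0 => [|x /negbTE xS].
  have silent0 : [forall i, ~~ silent i] by apply/forallP => i; rewrite ffunE.
  by rewrite /weight /= silent0; case: ifP; rewrite ?mulr1 ?mulr0.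
case: ifP => // _; rewrite /weight /=; case: ifP; rewrite ?mulr0 // => /forallP x0.
by move/eqP: xS; case; apply/ffunP => i; rewrite ffunE; apply/negbTE.
Qed.

Lemma Prob_mono E F : E \subset F -> P E <= P F.
Proof.
move=> /subsetP EF; rewrite /Prob [X in X <= _]big_mkcond [X in _ <= X]big_mkcond.
apply: ler_sum => w _; case: ifP => [/EF -> //|_].
by case: ifP => _; [apply: weight_ge0 | ].
Qed.

Lemma sum_weight_le1 (Q : pred X) : \sum_(x | Q x) W x <= 1.
Proof.
rewrite -(sum_tree_weight eps tree) [X in _ <= X](bigID Q) /= lerDl.
by apply: sumr_ge0 => x _; apply: tree_weight_ge0.
Qed.

Definition reach (i : 'I_I) : R := \sum_(x : X | x i) W x.
Definition parent_reach (i : 'I_I) : R := \sum_(x : X | pr x i) W x.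

Lemma reachE i : reach i = (1 - eps) * parent_reach i.
Proof. exact: sum_received. Qed.

Lemma tree_weight_all_received : W all_received = (1 - eps) ^+ I.
Proof.
rewrite /tree_weight (eq_bigr (fun=> 1 - eps)) ?prodr_const ?card_ord // => i _.
by rewrite /parent_rec ffunE; case: (par i) => [k|] //=; rewrite ffunE.
Qed.

Lemma parent_reach_gt0 i : 0 < parent_reach i.
Proof.
have all_pr : pr all_received i by rewrite /parent_rec; case: (par i) => [k|] //; rewrite ffunE.
rewrite /parent_reach (bigD1 all_received) //= tree_weight_all_received.
apply: ltr_pwDl; first by apply: exprn_gt0; case/andP: eps01 => ? ?; lra.
by apply: sumr_ge0 => x _; apply: tree_weight_ge0.
Qed.

Lemma parent_reach_seed s : par s = None -> parent_reach s = 1.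
Proof.
by move=> ps; rewrite -(sum_tree_weight eps tree); apply: eq_bigl => x; rewrite /parent_rec ps.
Qed.

Lemma sum_not_received i : \sum_(x : X | ~~ x i) W x = 1 - reach i.
Proof.
by rewrite /reach -(sum_tree_weight eps tree) [in RHS](bigID (fun x : X => x i)) /=; ring.
Qed.

Lemma sum_lost i : \sum_(x : X | pr x i && ~~ x i) W x = eps * parent_reach i.
Proof.
have received_pr : \sum_(x : X | pr x i && x i) W x = reach i.
  rewrite /reach [RHS](bigID (fun x : X => pr x i)) /= [X in _ = _ + X]big1 ?addr0.
    by apply: eq_bigl => x; rewrite andbC.
  by move=> x /andP[xi /negbTE npr]; rewrite /tree_weight (bigD1 i) //= xi npr mul0r.
apply: (@addrI _ (reach i)); rewrite -[in LHS]received_pr -bigID /= reachE.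
by rewrite /parent_reach; ring.
Qed.

Lemma Prob_obs_true i : P (obs i true) = rho * reach i.
Proof.
rewrite ProbE !inE ffunE /= mulr0 addr0; congr (_ * _).
by apply: eq_bigl => x; rewrite inE /= eqb_id.
Qed.

Lemma Prob_obs_false i : P (obs i false) = 1 - rho * reach i.
Proof.
rewrite ProbE !inE ffunE /= mulr1 (eq_bigl (fun x : X => ~~ x i)) => [|x].
  by rewrite sum_not_received; ring.
by rewrite inE /= eqbF_neg.
Qed.

Lemma reach_bounds i : 0 < reach i <= 1 - eps.
Proof.
have m_gt0 := parent_reach_gt0 i; have m_le1 : parent_reach i <= 1 := sum_weight_le1 _.
rewrite reachE; case/andP: eps01 => ? ?; apply/andP; split; first by apply: mulr_gt0; lra.
by rewrite -[X in _ <= X]mulr1; apply: ler_wpM2l; lra.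
Qed.

Lemma Prob_obs_gt0 i v : 0 < P (obs i v).
Proof.
have /andP[r_gt0 r_le] := reach_bounds i; case/andP: rho01 => ? ?; case/andP: eps01 => ? ?.
by case: v; rewrite ?Prob_obs_true ?Prob_obs_false; nra.
Qed.

Lemma cond_le1 E i v : cnd E i v <= 1.
Proof. by rewrite /cond ler_pdivrMr ?mul1r ?Prob_obs_gt0 ?Prob_mono ?subsetIr. Qed.

Lemma cond_mono E F i v : E \subset F -> cnd E i v <= cnd F i v.
Proof. by move=> EF; rewrite /cond ler_pM2r ?invr_gt0 ?Prob_obs_gt0 ?Prob_mono ?setSI. Qed.

Lemma cond_G_true i : cnd (Gev I) i true = 1.
Proof.
rewrite /cond; have -> : P (Gev I :&: obs i true) = P (obs i true).
  by rewrite !ProbE !inE ffunE /=; congr (_ * _ + _); apply: eq_bigl => x; rewrite !inE.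
by rewrite divff // gt_eqF ?Prob_obs_gt0.
Qed.

Lemma q1_le_posterior_G_false i : q1 rho eps <= cnd (Gev I) i false.
Proof.
rewrite /cond; have -> : P (Gev I :&: obs i false) = rho * (1 - reach i).
  rewrite ProbE !inE /= mulr0 addr0 -sum_not_received; congr (_ * _).
  by apply: eq_bigl => x; rewrite !inE /= eqbF_neg.
rewrite Prob_obs_false; apply: q1_le_posterior_G => //; first by case/andP: eps01 => /ltW.
by have /andP[/ltW -> ->] := reach_bounds i.
Qed.

Definition parent_sent (j : 'I_I) : {set Omega I} :=
  [set w : Omega I | if par j is Some k then w.2 k else w.1].

Lemma cond_false_le_q1 E j :
  E \subset parent_sent j :|: obs j true -> cnd E j false <= q1 rho eps.
Proof.
move=> sub; apply: le_trans (cond_mono j false sub) _; rewrite /cond.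
have -> : P ((parent_sent j :|: obs j true) :&: obs j false) = rho * eps * parent_reach j.
  rewrite ProbE !inE /= ffunE /=; case: (par j) => [?|]; rewrite /= ?ffunE mulr0 addr0;
  rewrite -mulrA -sum_lost; congr (_ * _); apply: eq_bigl => x; rewrite !inE /parent_rec /=;
  by case: (par j) => [k|]; case: (x j); rewrite /= ?orbT ?orbF ?andbT ?andbF.
rewrite Prob_obs_false reachE mulrA; apply: posterior_lost_le_q1 => //.
  by case/andP: eps01 => /ltW -> /ltW ->.
by rewrite (ltW (parent_reach_gt0 j)) sum_weight_le1.
Qed.

Lemma cond_Ystar i : cnd (Ystar I) i true = q2 I eps / parent_reach i.
Proof.
rewrite /cond; have -> : Ystar I :&: obs i true = Ystar I.
  by apply/setIidPl/subsetP => w; rewrite !inE => /forallP/(_ i) ->.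
have -> : P (Ystar I) = rho * (1 - eps) ^+ I.
  rewrite ProbE (big_pred1 all_received) => [|x]; last first.
    rewrite !inE /=; apply/forallP/eqP => [H|-> j]; last by rewrite ffunE.
    by apply/ffunP => j; rewrite ffunE H.
  rewrite tree_weight_all_received !inE /=.
  have -> : [forall j, silent j] = false.
    by apply/negbTE/forallPn; exists (Ordinal I_gt0); rewrite ffunE.
  by rewrite mulr0 addr0.
rewrite Prob_obs_true reachE /q2 -[in LHS](prednK I_gt0) exprS.
have ? := parent_reach_gt0 i; case/andP: rho01 => ? _; case/andP: eps01 => _ ?.
by field; rewrite !gt_eqF ?subr_gt0.
Qed.

Local Notation B p := (Bp rho eps par p).
Local Notation CpG p := (Cp rho eps par p (Gev I)).

Lemma in_BpP p E w : reflect (forall i, p <= cnd E i (w.2 i)) (w \in B p E).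
Proof.
apply: (iffP bigcapP) => [H i | H i _]; last by rewrite inE.
by move/(_ i isT): H; rewrite inE.
Qed.

Lemma Bp_mono p E F : E \subset F -> B p E \subset B p F.
Proof.
move=> EF; apply/subsetP => w /in_BpP H; apply/in_BpP => i.
exact: le_trans (H i) (cond_mono _ _ EF).
Qed.

Lemma Bp_G_setT p : p <= q1 rho eps -> B p (Gev I) = setT.
Proof.
move=> p_le; apply/setP => w; rewrite inE; apply/in_BpP => i.
apply: le_trans p_le _; apply: le_trans (q1_le_posterior_G_false i) _.
by case: (w.2 i); rewrite ?cond_G_true ?cond_le1.
Qed.

Lemma iter_Bp_G_setT p l : p <= q1 rho eps -> iter l.+1 (B p) (Gev I) = setT.
Proof.
move=> p_le; elim: l => [|l IH]; first exact: Bp_G_setT.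
apply/eqP; rewrite eqEsubset subsetT -{1}(Bp_G_setT p_le) iterS IH.
by apply: Bp_mono; apply: subsetT.
Qed.

(* [iter l (up par) (Some j) = None] iff [j] is at distance at most [l] from
   the planner. *)
Definition received_upto (l : nat) : {set Omega I} :=
  [set w : Omega I | [forall j, (iter l (up par) (Some j) == None) ==> w.2 j]].

Lemma Bp_forces_received p E j w : q1 rho eps < p ->
  E \subset parent_sent j :|: obs j true -> w \in B p E -> w.2 j.
Proof.
move=> q1_lt sub /in_BpP/(_ j); case: (w.2 j) => // p_le.
by have := le_lt_trans (le_trans p_le (cond_false_le_q1 sub)) q1_lt; rewrite ltxx.
Qed.

Lemma Bp_G_received p : q1 rho eps < p -> B p (Gev I) \subset received_upto 1.
Proof.
move=> q1_lt; apply/subsetP => w wB; rewrite inE; apply/forallP => j.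
apply/implyP => /eqP pj; apply: Bp_forces_received q1_lt _ wB.
by apply/subsetP => v; rewrite !inE [par j]pj => ->.
Qed.

Lemma Bp_received_step p l E : q1 rho eps < p ->
  E \subset received_upto l.+1 -> B p E \subset received_upto l.+2.
Proof.
move=> q1_lt sub; apply/subsetP => w wB; rewrite inE; apply/forallP => j.
apply/implyP; rewrite iterSr [up par (Some j)]/= => depth_j.
apply: Bp_forces_received q1_lt _ wB.
apply/subsetP => v /(subsetP sub); rewrite !inE => /forallP vR.
case pj: (par j) depth_j => [k|] depth_j; first by rewrite (implyP (vR k)).
by rewrite (implyP (vR j)) ?orbT // iterSr [up par (Some j)]/= pj iter_up_None.
Qed.

Lemma iter_Bp_received p l : q1 rho eps < p ->
  iter l.+1 (B p) (Gev I) \subset received_upto l.+1.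
Proof.
move=> q1_lt; elim: l => [|l IH]; first exact: Bp_G_received.
exact: Bp_received_step.
Qed.

Lemma iter_Bp_G_sub_Ystar p : q1 rho eps < p ->
  exists l, iter l.+1 (B p) (Gev I) \subset Ystar I.
Proof.
move=> q1_lt; have [L depth] := depth_bound tree; exists L.
apply: subset_trans (iter_Bp_received L q1_lt) _; apply/subsetP => w.
rewrite !inE => /forallP R_w; apply/forallP => j.
by apply: (implyP (R_w j)); rewrite iterS depth.
Qed.

Lemma Ystar_sub_iter_Bp p l : p <= q2 I eps -> Ystar I \subset iter l.+1 (B p) (Gev I).
Proof.
move=> p_le.
have Ystar_sub E : (forall i, q2 I eps <= cnd E i true) -> Ystar I \subset B p E.
  move=> E_ge; apply/subsetP => w; rewrite inE => /forallP Yw.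
  by apply/in_BpP => i; rewrite Yw; apply: le_trans p_le (E_ge i).
elim: l => [|l IH].
  by apply: Ystar_sub => i; rewrite cond_G_true /q2 exprn_ile1 //; case/andP: eps01 => ? ?; lra.
apply: subset_trans (Bp_mono p IH); apply: Ystar_sub => i.
have /andP[m_gt0 m_le1] : 0 < parent_reach i <= 1 by rewrite parent_reach_gt0 sum_weight_le1.
rewrite cond_Ystar ler_pdivlMr // ler_piMr //.
by rewrite /q2 exprn_ge0 // subr_ge0; case/andP: eps01 => _ /ltW.
Qed.

Lemma CpG_low p w : p <= q1 rho eps -> CpG p w.
Proof. by move=> p_le l; rewrite iter_Bp_G_setT ?inE. Qed.

Lemma CpG_mid p w : q1 rho eps < p <= q2 I eps -> CpG p w <-> w \in Ystar I.
Proof.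
case/andP=> q1_lt p_le; split => [Cw | Yw l].
  by have [l /subsetP] := iter_Bp_G_sub_Ystar q1_lt; apply; apply: Cw.
exact: subsetP (Ystar_sub_iter_Bp l p_le) w Yw.
Qed.

(* A seed that received the message believes [Ystar] with probability exactly q2. *)
Lemma CpG_high p w : q1 rho eps < p -> q2 I eps < p -> ~ CpG p w.
Proof.
move=> q1_lt q2_lt Cw; have [s ps] := exists_seed tree I_gt0.
have [l sub] := iter_Bp_G_sub_Ystar q1_lt.
have := subsetP sub w (Cw l); rewrite inE => /forallP Yw.
have := Cw l.+1; rewrite iterS => /in_BpP/(_ s); rewrite Yw => p_le.
have := le_trans p_le (cond_mono s true sub).
by rewrite cond_Ystar parent_reach_seed // divr1 leNgt q2_lt.
Qed.

End Beliefs.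

Theorem proposition1 (R : realFieldType) (I : nat) (rho eps epsbar : R)
  (par : 'I_I -> option 'I_I) (p : R) :
  (2 <= I)%N -> 0 < rho < 1 ->
  0 < epsbar < 1 -> q1 rho epsbar = q2 I epsbar ->
  0 < eps -> eps < epsbar ->
  info_tree par ->
  (p <= q1 rho eps -> forall w, Cp rho eps par p (Gev I) w) /\
  (q1 rho eps < p <= q2 I eps ->
     forall w, Cp rho eps par p (Gev I) w <-> w \in Ystar I) /\
  (q2 I eps < p -> forall w, ~ Cp rho eps par p (Gev I) w).
Proof.
move=> I_ge2 rho01 /andP[_ epsbar_lt1] q_eq eps_gt0 eps_lt tree.
have eps01 : 0 < eps < 1 by rewrite eps_gt0 (lt_trans eps_lt).
have I_gt0 : (0 < I)%N by apply: leq_trans I_ge2.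
have q1_lt_q2 : q1 rho eps < q2 I eps.
  apply: lt_le_trans (q1_increasing rho01 (ltW eps_gt0) eps_lt) _.
  by rewrite q_eq q2_nonincreasing ?(ltW eps_gt0) ?(ltW eps_lt) ?(ltW epsbar_lt1).
split; [|split] => [p_le w | p_mid w | q2_lt w].
- exact: CpG_low.
- exact: CpG_mid.
- exact: CpG_high (lt_trans q1_lt_q2 q2_lt) q2_lt.
Qed.
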